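(* Let $0<p<1/2$ and let $\mathcal E_p$ be the qubit channel mapping every input state $\varrho$ to the fixed state $\xi_p=p|0\rangle\langle 0|+(1-p)|1\rangle\langle 1|$. Then the boundariness of $\mathcal E_p$ in the convex set of qubit channels is $b(\mathcal E_p)=p(1-p)$, and this is strictly larger than the minimal eigenvalue $\lambda_{\min}=p/2$ of the Choi–Jamiolkowski operator $E_p=\xi_p\otimes\tfrac12 I$ of $\mathcal E_p$.
   Context: A qubit channel is a completely positive trace-preserving linear map on $2\times 2$ complex matrices; the set of qubit channels is convex. The Choi–Jamiolkowski operator of a channel $\mathcal E$ is $E=(\mathcal E\otimes\mathcal I)(|\psi_+\rangle\langle\psi_+|)$ with $|\psi_+\rangle=\frac1{\sqrt2}(|00\rangle+|11\rangle)$. For a convex set $Z$ and $x,y\in Z$, the weight function is $t_y(x)=\sup\{0\leq t<1 : \frac{y-tx}{1-t}\in Z\}$, and the boundariness of $y$ is $b(y)=\inf_{x\in Z}t_y(x)$. *)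

From HB Require Import structures.
From mathcomp Require Import all_boot all_order all_algebra.
From mathcomp Require Import boolp classical_sets reals.
From mathcomp Require Import complex mxtens.

Set Implicit Arguments.
Unset Strict Implicit.
Unset Printing Implicit Defensive.

Import Order.TTheory GRing.Theory Num.Theory.
Local Open Scope ring_scope.
Local Open Scope classical_set_scope.

Section Qubit.
Variable R : realType.
Local Notation C := (R[i]).

Definition rC (x : R) : C := Complex x 0.

Definition adjmx {m n} (A : 'M[C]_(m, n)) : 'M[C]_(n, m) :=
  (map_mx Num.conj A)^T.

Definition psd {n} (A : 'M[C]_n) : Prop :=
  forall v : 'cV[C]_n, 0 <= (adjmx v *m A *m v) 0 0.

(* (E ⊗ id_k) acting on operators on C^2 ⊗ C^k (system first, via mxtens) *)
Definition ampl (E : 'M[C]_2 -> 'M[C]_2) (k : nat) (X : 'M[C]_(2 * k))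
  : 'M[C]_(2 * k) :=
  \matrix_(r, s)
    E (\matrix_(a, b) X (mxtens_index (a, (mxtens_unindex r).2))
                        (mxtens_index (b, (mxtens_unindex s).2)))
      (mxtens_unindex r).1 (mxtens_unindex s).1.

Definition is_linear_map (E : 'M[C]_2 -> 'M[C]_2) : Prop :=
  forall (c : C) (A B : 'M[C]_2), E (c *: A + B) = c *: E A + E B.

Definition completely_positive (E : 'M[C]_2 -> 'M[C]_2) : Prop :=
  forall (k : nat) (X : 'M[C]_(2 * k)), psd X -> psd (ampl E X).

Definition trace_preserving (E : 'M[C]_2 -> 'M[C]_2) : Prop :=
  forall A : 'M[C]_2, \tr (E A) = \tr A.

Definition qubit_channel : set ('M[C]_2 -> 'M[C]_2) :=
  [set E | is_linear_map E /\ completely_positive E /\ trace_preserving E].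

Definition affcomb (t : R) (y x : 'M[C]_2 -> 'M[C]_2) : 'M[C]_2 -> 'M[C]_2 :=
  fun A => rC ((1 - t)^-1) *: (y A - rC t *: x A).

Definition weight (Z : set ('M[C]_2 -> 'M[C]_2)) (y x : 'M[C]_2 -> 'M[C]_2) : R :=
  sup [set t : R | 0 <= t < 1 /\ Z (affcomb t y x)].

Definition boundariness (Z : set ('M[C]_2 -> 'M[C]_2)) (y : 'M[C]_2 -> 'M[C]_2) : R :=
  inf [set weight Z y x | x in Z].

(* Choi-Jamiolkowski operator (E ⊗ I)(|psi+><psi+|),
   |psi+><psi+| = 1/2 sum_{i,j} |i><j| ⊗ |i><j| *)
Definition choi (E : 'M[C]_2 -> 'M[C]_2) : 'M[C]_(2 * 2) :=
  \sum_(i < 2) \sum_(j < 2) rC (1 / 2) *: (E (delta_mx i j) *t delta_mx i j).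

Definition xi (p : R) : 'M[C]_2 :=
  rC p *: delta_mx 0 0 + rC (1 - p) *: delta_mx 1 1.

Definition Ep (p : R) : 'M[C]_2 -> 'M[C]_2 := fun rho => \tr rho *: xi p.

End Qubit.

(* The replacement channel E_p forgets its input: (E_p ⊗ id)(X) = ξ_p ⊗ tr_1 X.  If F is
   a channel and M = (F ⊗ id)(X) with X ≥ 0, trace preservation gives tr_1 X = tr_1 M, so
   on a vector v = e_0 ⊗ v0 + e_1 ⊗ v1 the form of (E_p ⊗ id)(X) is at least
   p <e_0⊗v0|M|e_0⊗v0> + (1-p) <e_1⊗v1|M|e_1⊗v1> ≥ p(1-p) <v|M|v>.  Hence E_p - t F is
   completely positive for t ≤ p(1-p), i.e. t_{E_p}(F) ≥ p(1-p) for every channel F.  For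
   F = id, testing on the maximally entangled projector against (1-p)|00> + p|11> shows
   t ≤ p(1-p), so the infimum is attained there.  The Choi operator is diagonal with
   entries p/2, p/2, (1-p)/2, (1-p)/2, whose minimum p/2 lies below p(1-p) as p < 1/2. *)

From HB Require Import structures.
From mathcomp Require Import all_boot all_order all_algebra.
From mathcomp Require Import boolp classical_sets reals.
From mathcomp Require Import complex mxtens.
From mathcomp Require Import ring lra.

Import Order.TTheory GRing.Theory Num.Theory.
Local Open Scope complex_scope.
Local Open Scope ring_scope.

Set Implicit Arguments.
Unset Strict Implicit.
Unset Printing Implicit Defensive.

Section Sesquilinear.
Variable R : realType.
Local Notation C := (R[i]).

Lemma rC_real (x : R) : rC x \is Num.real.
Proof. by rewrite realE -[0 : C]/((0 : R)%:C) !lecR le_total. Qed.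

Lemma conj_rC (x : R) : Num.conj (rC x) = rC x.
Proof. exact: conj_Creal (rC_real x). Qed.

Lemma rC_ge0 (x : R) : (0 <= rC x) = (0 <= x).
Proof. exact: ler0c. Qed.

Lemma rCE (x : R) : rC x = x%:C. Proof. by []. Qed.

Definition rmorphE := (rmorphB, rmorphD, rmorphM, rmorph1, rmorph0, rmorphN).

Lemma sum_ord2 (V : nmodType) (F : 'I_2 -> V) : \sum_(a < 2) F a = F 0 + F 1.
Proof. by rewrite big_ord_recl big_ord1; congr (_ + F _); apply: val_inj. Qed.

Lemma ord2P (a : 'I_2) : a = 0 \/ a = 1.
Proof. by case: a => -[|[|//]] ?; [left|right]; apply: val_inj. Qed.

Lemma adjmxD m n (A B : 'M[C]_(m, n)) : adjmx (A + B) = adjmx A + adjmx B.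
Proof. by apply/matrixP => i j; rewrite !mxE rmorphD. Qed.

Lemma adjmxZ m n c (A : 'M[C]_(m, n)) : adjmx (c *: A) = Num.conj c *: adjmx A.
Proof. by apply/matrixP => i j; rewrite !mxE rmorphM. Qed.

Lemma adjmx_delta m n (i : 'I_m) (j : 'I_n) : adjmx (delta_mx i j : 'M[C]_(m, n)) = delta_mx j i.
Proof. by apply/matrixP => r s; rewrite !mxE rmorph_nat andbC. Qed.

Variable n : nat.
Implicit Types (M : 'M[C]_n) (u w : 'cV[C]_n).

Definition sesq M u w : C := (adjmx u *m M *m w) 0 0.

Lemma sesqE M u w :
  sesq M u w = \sum_r \sum_s Num.conj (u r 0) * M r s * w s 0.
Proof.
rewrite /sesq mxE exchange_big; apply: eq_bigr => s _.
by rewrite mxE big_distrl; apply: eq_bigr => r _; rewrite !mxE.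
Qed.

Lemma sesqDl M u1 u2 w : sesq M (u1 + u2) w = sesq M u1 w + sesq M u2 w.
Proof. by rewrite /sesq adjmxD !mulmxDl mxE. Qed.

Lemma sesqZl M c u w : sesq M (c *: u) w = Num.conj c * sesq M u w.
Proof. by rewrite /sesq adjmxZ -!scalemxAl mxE. Qed.

Lemma sesqDr M u w1 w2 : sesq M u (w1 + w2) = sesq M u w1 + sesq M u w2.
Proof. by rewrite /sesq mulmxDr mxE. Qed.

Lemma sesqZr M c u w : sesq M u (c *: w) = c * sesq M u w.
Proof. by rewrite /sesq -scalemxAr mxE. Qed.

Lemma sesq_scaleB M N c d u :
  sesq (c *: (M - d *: N)) u u = c * (sesq M u u - d * sesq N u u).
Proof.
by rewrite /sesq -scalemxAr mulmxBr -scalemxAr -scalemxAl mulmxBl -scalemxAl !mxE.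
Qed.

Lemma sesq_rank1 w u : sesq (w *m adjmx w) u u = sesq 1%:M u w * Num.conj (sesq 1%:M u w).
Proof.
rewrite /sesq mulmx1 !mulmxA -(mulmxA _ (adjmx w)) mxE big_ord1; congr (_ * _).
rewrite !mxE rmorph_sum; apply: eq_bigr => r _.
by rewrite !mxE rmorphM /= conjCK mulrC.
Qed.

Lemma sesq1_delta i j : sesq 1%:M (delta_mx i 0) (delta_mx j 0) = (i == j)%:R.
Proof. by rewrite /sesq adjmx_delta mulmx1 mul_delta_mx_cond mulmxnE mxE !eqxx. Qed.

Lemma psd_rank1 w : psd (w *m adjmx w).
Proof. by move=> u; rewrite -/(sesq _ u u) sesq_rank1 mul_conjC_ge0. Qed.

Lemma sesq_mix M (p : R) v0 v1 :
  rC p * sesq M v0 v0 + rC (1 - p) * sesq M v1 v1 =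
  rC (p * (1 - p)) * sesq M (v0 + v1) (v0 + v1) +
  sesq M (rC p *: v0 - rC (1 - p) *: v1) (rC p *: v0 - rC (1 - p) *: v1).
Proof.
rewrite -scaleNr !(sesqDl, sesqDr, sesqZl, sesqZr) rmorphN /= !conj_rC !rCE !rmorphE; ring.
Qed.

End Sesquilinear.

Section Slices.
Variable R : realType.
Local Notation C := (R[i]).
Variables m k : nat.
Implicit Types (M : 'M[C]_(m * k)) (u w : 'cV[C]_k) (v : 'cV[C]_(m * k)).

Lemma sum_mxtens_index (F : 'I_(m * k) -> C) :
  \sum_r F r = \sum_(a < m) \sum_(i < k) F (mxtens_index (a, i)).
Proof.
rewrite pair_big (reindex (@mxtens_index m k)) /=; first by apply: eq_bigr => -[].
by exists (@mxtens_unindex m k) => r _; rewrite (mxtens_indexK, mxtens_unindexK).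
Qed.

(* [inslice a u] is the vector e_a ⊗ u. *)
Definition inslice (a : 'I_m) u : 'cV[C]_(m * k) :=
  \col_r (if (mxtens_unindex r).1 == a then u (mxtens_unindex r).2 0 else 0).

Definition slice (a : 'I_m) v : 'cV[C]_k := \col_i v (mxtens_index (a, i)) 0.

Definition ptrace M : 'M[C]_k :=
  \matrix_(i, j) \sum_(a < m) M (mxtens_index (a, i)) (mxtens_index (a, j)).

Lemma slice_sum v : v = \sum_a inslice a (slice a v).
Proof.
apply/matrixP => r j; rewrite summxE (ord1 j); case: (mxtens_indexP r) => a i.
rewrite (bigD1 a) //= big1 => [|b ba]; rewrite !mxE mxtens_indexK /=.
  by rewrite eqxx addr0.
by rewrite eq_sym (negbTE ba).
Qed.

Lemma sesq_inslice M a b u w :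
  sesq M (inslice a u) (inslice b w) =
  \sum_i \sum_j Num.conj (u i 0) * M (mxtens_index (a, i)) (mxtens_index (b, j)) * w j 0.
Proof.
rewrite sesqE sum_mxtens_index (bigD1 a) //= [X in _ + X]big1 ?addr0 => [|c ca]; last first.
  apply: big1 => i _; apply: big1 => s _.
  by rewrite mxE mxtens_indexK /= (negbTE ca) rmorph0 !mul0r.
apply: eq_bigr => i _; rewrite sum_mxtens_index (bigD1 b) //= [X in _ + X]big1 ?addr0 => [|c cb].
  by apply: eq_bigr => j _; rewrite !mxE !mxtens_indexK /= !eqxx.
by apply: big1 => j _; rewrite [inslice b w _ _]mxE mxtens_indexK /= (negbTE cb) mulr0.
Qed.

Lemma sesq_ptrace M u w :
  sesq (ptrace M) u w = \sum_a sesq M (inslice a u) (inslice a w).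
Proof.
rewrite sesqE; under [RHS]eq_bigr do rewrite sesq_inslice.
rewrite [RHS]exchange_big; apply: eq_bigr => i _; rewrite [RHS]exchange_big.
apply: eq_bigr => j _.
by rewrite mxE mulr_sumr mulr_suml.
Qed.

Lemma sesq1_inslice a b u w :
  sesq 1%:M (inslice a u) (inslice b w) = (a == b)%:R * sesq 1%:M u w.
Proof.
rewrite sesq_inslice sesqE mulr_sumr; apply: eq_bigr => i _.
rewrite mulr_sumr; apply: eq_bigr => j _.
rewrite !mxE (inj_eq (can_inj (@mxtens_indexK m k))) xpair_eqE.
by case: (a == b); rewrite ?mul1r ?mulr0 ?mul0r.
Qed.

End Slices.

Section ReplacementChannel.
Variable R : realType.
Local Notation C := (R[i]).
Implicit Types (p t : R) (x y : 'M[C]_2 -> 'M[C]_2).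

Definition subblock k (X : 'M[C]_(2 * k)) (i j : 'I_k) : 'M[C]_2 :=
  \matrix_(a, b) X (mxtens_index (a, i)) (mxtens_index (b, j)).

Lemma ampl_index x k (X : 'M[C]_(2 * k)) a i b j :
  ampl x X (mxtens_index (a, i)) (mxtens_index (b, j)) = x (subblock X i j) a b.
Proof. by rewrite /ampl mxE !mxtens_indexK. Qed.

Lemma ptrace_ampl x k (X : 'M[C]_(2 * k)) :
  trace_preserving x -> ptrace (ampl x X) = ptrace X.
Proof.
move=> TPx; apply/matrixP => i j; rewrite !mxE.
transitivity (\tr (x (subblock X i j))).
  by apply: eq_bigr => a _; rewrite ampl_index.
by rewrite TPx; apply: eq_bigr => a _; rewrite mxE.
Qed.

Lemma ampl_affcomb t y x k (X : 'M[C]_(2 * k)) :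
  ampl (affcomb t y x) X = rC ((1 - t)^-1) *: (ampl y X - rC t *: ampl x X).
Proof. by apply/matrixP => r s; rewrite !mxE. Qed.

Lemma ampl_idfun k (X : 'M[C]_(2 * k)) : ampl idfun X = X.
Proof.
apply/matrixP => r s; case: (mxtens_indexP r) => a i; case: (mxtens_indexP s) => b j.
by rewrite ampl_index mxE.
Qed.

Lemma idfun_channel : qubit_channel (idfun : 'M[C]_2 -> 'M[C]_2).
Proof. by split; [|split] => // k X; rewrite ampl_idfun. Qed.

Lemma xiE p :
  [/\ xi p 0 0 = rC p, xi p 0 1 = 0, xi p 1 0 = 0 & xi p 1 1 = rC (1 - p)].
Proof. by rewrite /xi !mxE /= !mulr1 !mulr0 !addr0 add0r. Qed.

Lemma mxtrace_xi p : \tr (xi p) = 1.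
Proof.
have [x00 _ _ x11] := xiE p.
by rewrite /mxtrace sum_ord2 x00 x11 !rCE -rmorphD subrKC.
Qed.

Lemma ampl_Ep_index p k (X : 'M[C]_(2 * k)) a i b j :
  ampl (Ep p) X (mxtens_index (a, i)) (mxtens_index (b, j)) = ptrace X i j * xi p a b.
Proof.
rewrite ampl_index /Ep mxE [ptrace _ _ _]mxE /mxtrace; congr (_ * _).
by apply: eq_bigr => c _; rewrite mxE.
Qed.

Lemma sesq_ampl_Ep_inslice p k (X : 'M[C]_(2 * k)) a b u w :
  sesq (ampl (Ep p) X) (inslice a u) (inslice b w) = xi p a b * sesq (ptrace X) u w.
Proof.
rewrite sesq_inslice sesqE mulr_sumr; apply: eq_bigr => i _.
by rewrite mulr_sumr; apply: eq_bigr => j _; rewrite ampl_Ep_index; ring.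
Qed.

Lemma slice_sum2 k (v : 'cV[C]_(2 * k)) : v = inslice 0 (slice 0 v) + inslice 1 (slice 1 v).
Proof. by rewrite {1}[v]slice_sum sum_ord2. Qed.

Lemma sesq_ampl_Ep p k (X : 'M[C]_(2 * k)) v :
  sesq (ampl (Ep p) X) v v = rC p * sesq (ptrace X) (slice 0 v) (slice 0 v)
                           + rC (1 - p) * sesq (ptrace X) (slice 1 v) (slice 1 v).
Proof.
have [x00 x01 x10 x11] := xiE p.
rewrite {1 2}[v]slice_sum2 !(sesqDl, sesqDr) !sesq_ampl_Ep_inslice x00 x01 x10 x11.
by rewrite !mul0r addr0 add0r.
Qed.

Lemma affcomb_Ep_cp p t x : qubit_channel x -> 0 <= p <= 1 ->
  0 <= t <= p * (1 - p) -> t < 1 -> completely_positive (affcomb t (Ep p) x).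
Proof.
move=> [_ [CPx TPx]] /andP[p0 p1] /andP[t0 tp] t1 k X HX v.
rewrite -/(sesq _ v v) ampl_affcomb sesq_scaleB.
apply: mulr_ge0; first by rewrite rC_ge0 invr_ge0 subr_ge0 ltW.
have HM := CPx k X HX; set M := ampl x X in HM *.
rewrite sesq_ampl_Ep -(ptrace_ampl X TPx) -/M !sesq_ptrace !sum_ord2.
set v0 := slice 0 v; set v1 := slice 1 v.
have -> : sesq M v v = sesq M (inslice 0 v0 + inslice 1 v1) (inslice 0 v0 + inslice 1 v1).
  by rewrite -slice_sum2.
have mix := sesq_mix M p (inslice 0 v0) (inslice 1 v1).
set Q := sesq M (_ + _) (_ + _) in mix *.
set W := sesq M (rC p *: _ - _) _ in mix.
set F0 := sesq M (inslice 0 v0) (inslice 0 v0) in mix *.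
set F1 := sesq M (inslice 1 v1) (inslice 1 v1) in mix *.
set A := sesq M (inslice 1 v0) (inslice 1 v0).
set B := sesq M (inslice 0 v1) (inslice 0 v1).
have -> : rC p * (F0 + A) + rC (1 - p) * (B + F1) - rC t * Q =
          rC (p * (1 - p) - t) * Q + rC p * A + rC (1 - p) * B + W.
  have -> : W = rC p * F0 + rC (1 - p) * F1 - rC (p * (1 - p)) * Q.
    by rewrite mix addrAC subrr add0r.
  by rewrite !rCE !rmorphE; ring.
by rewrite !addr_ge0 ?mulr_ge0 ?rC_ge0 ?subr_ge0 //; exact: HM.
Qed.

Lemma affcomb_Ep_channel p t x : qubit_channel x -> 0 <= p <= 1 ->
  0 <= t <= p * (1 - p) -> t < 1 -> qubit_channel (affcomb t (Ep p) x).
Proof.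
move=> chx p01 t0p t1; have [Lx [_ TPx]] := chx.
split; [|split].
- move=> c A B; rewrite /affcomb /Ep Lx mxtraceD mxtraceZ.
  move: (\tr A) (\tr B) (xi p) (x A) (x B) => a b X0 XA XB.
  by apply/matrixP => i j; rewrite !mxE; ring.
- exact: affcomb_Ep_cp.
move=> A; rewrite /affcomb mxtraceZ raddfB /= !mxtraceZ TPx mxtrace_xi mulr1 !rCE.
rewrite -{1}[\tr A]mul1r -mulrBl mulrA.
have -> : 1 - t%:C = (1 - t)%:C by rewrite rmorphB rmorph1.
by rewrite -rmorphM mulVf ?rmorph1 ?mul1r // subr_eq0 eq_sym lt_eqF.
Qed.

Definition omega : 'cV[C]_(2 * 2) := inslice 0 (delta_mx 0 0) + inslice 1 (delta_mx 1 0).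

(* Testing complete positivity on the (unnormalised) maximally entangled projector
   against (1 - p) e_0 ⊗ e_0 + p e_1 ⊗ e_1. *)
Lemma affcomb_Ep_idfun_le p t : 0 <= t -> t < 1 ->
  qubit_channel (affcomb t (Ep p) idfun) -> t <= p * (1 - p).
Proof.
move=> t0 t1 [_ [CP _]].
pose v : 'cV[C]_(2 * 2) := rC (1 - p) *: inslice 0 (delta_mx 0 0) + rC p *: inslice 1 (delta_mx 1 0).
have := CP 2 _ (psd_rank1 omega) v.
rewrite -/(sesq _ v v) ampl_affcomb sesq_scaleB ampl_idfun.
have [x00 x01 x10 x11] := xiE p.
rewrite sesq_rank1 /v !(sesqDl, sesqDr, sesqZl, sesqZr) !conj_rC.
rewrite !sesq_ampl_Ep_inslice x00 x01 x10 x11 !mul0r ?mulr0 ?addr0 ?add0r.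
rewrite !sesq_ptrace !sum_ord2 !sesq_rank1 !(sesqDr, sesq1_inslice, sesq1_delta) /=.
rewrite !(mulr1n, mulr0n, rmorph0, rmorph1, mulr0, mul0r, mulr1, mul1r, addr0, add0r).
have sum1 : rC (1 - p) + rC p = 1 by rewrite !rCE -rmorphD subrK.
rewrite sum1 rmorph1 mulr1.
have -> : rC (1 - p) * (rC (1 - p) * rC p) + rC p * (rC p * rC (1 - p)) - rC t * 1 =
          rC (p * (1 - p) - t) by rewrite !rCE !rmorphE; ring.
by rewrite !rCE -rmorphM ler0c pmulr_rge0 ?subr_ge0 // invr_gt0 subr_gt0.
Qed.

End ReplacementChannel.

Section Boundariness.
Variables (R : realType) (p : R).
Hypothesis p01 : 0 <= p <= 1.
Local Open Scope classical_set_scope.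
Local Notation channels := (@qubit_channel R).

Let admissible x := [set t : R | 0 <= t < 1 /\ qubit_channel (affcomb t (Ep p) x)].

Lemma mix_weight_ge0 : 0 <= p * (1 - p).
Proof. by case/andP: p01 => p0 p1; rewrite mulr_ge0 ?subr_ge0. Qed.

Lemma mix_weight_lt1 : p * (1 - p) < 1.
Proof. by case/andP: p01 => p0 p1; nra. Qed.

Lemma mix_weight_admissible x : qubit_channel x -> admissible x (p * (1 - p)).
Proof.
move=> chx; split; first by rewrite mix_weight_ge0 mix_weight_lt1.
by apply: affcomb_Ep_channel; rewrite ?p01 ?mix_weight_ge0 ?lexx ?mix_weight_lt1.
Qed.

Lemma weight_Ep_ge x : qubit_channel x -> p * (1 - p) <= weight channels (Ep p) x.
Proof.
move=> chx; apply: ub_le_sup; last exact: mix_weight_admissible.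
by exists 1 => t [/andP[_ /ltW]].
Qed.

Lemma weight_Ep_idfun : weight channels (Ep p) idfun = p * (1 - p).
Proof.
apply/le_anti/andP; split; last exact/weight_Ep_ge/idfun_channel.
apply: ge_sup; first by exists (p * (1 - p)); exact/mix_weight_admissible/idfun_channel.
by move=> t [/andP[t0 t1] cht]; exact: affcomb_Ep_idfun_le cht.
Qed.

Lemma boundariness_Ep : boundariness channels (Ep p) = p * (1 - p).
Proof.
have lb : lbound [set weight channels (Ep p) x | x in channels] (p * (1 - p)).
  by move=> _ [x chx <-]; exact: weight_Ep_ge.
have idW : [set weight channels (Ep p) x | x in channels] (p * (1 - p)).
  by exists idfun; [exact: idfun_channel | exact: weight_Ep_idfun].
apply/le_anti/andP; split; first exact: (ge_inf (ex_intro _ _ lb)) idW.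
by apply: lb_le_inf => //; exists (p * (1 - p)).
Qed.

End Boundariness.

Lemma eigenvalue_diag_mx (F : fieldType) n (d : 'rV[F]_n) j : eigenvalue (diag_mx d) (d 0 j).
Proof.
apply/eigenvalueP; exists (delta_mx 0 j); first by rewrite -rowE row_diag_mx.
by apply/eqP => /matrixP/(_ 0 j)/eqP; rewrite !mxE !eqxx oner_eq0.
Qed.

Lemma eigenvalue_diag_mxP (F : fieldType) n (d : 'rV[F]_n) a :
  eigenvalue (diag_mx d) a -> exists j, a = d 0 j.
Proof.
case/eigenvalueP => v vd_av nz_v.
have /existsP [j vj] : [exists j, v 0 j != 0].
  apply: contraR nz_v => /existsPn v0; apply/eqP/matrixP => i j.
  by rewrite (ord1 i) mxE; move/negPn/eqP: (v0 j).
exists j; move/matrixP/(_ 0 j): vd_av; rewrite mul_mx_diag !mxE mulrC.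
by move/(mulIf vj).
Qed.

Section ChoiOperator.
Variable R : realType.
Local Notation C := (R[i]).

Definition choi_Ep_diag (p : R) : 'rV[C]_(2 * 2) :=
  \row_r (if (mxtens_unindex r).1 == 0 then rC (p / 2) else rC ((1 - p) / 2)).

Lemma diag_choi_Ep_index p a i b j :
  diag_mx (choi_Ep_diag p) (mxtens_index (a, i)) (mxtens_index (b, j)) =
  (if a == 0 then rC (p / 2) else rC ((1 - p) / 2)) *+ ((a == b) && (i == j)).
Proof.
by rewrite mxE (inj_eq (can_inj (@mxtens_indexK 2 2))) xpair_eqE mxE mxtens_indexK.
Qed.

Lemma choi_Ep p : choi (Ep p) = diag_mx (choi_Ep_diag p).
Proof.
apply/matrixP => r s; case: (mxtens_indexP r) => a i; case: (mxtens_indexP s) => b j.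
rewrite diag_choi_Ep_index /choi summxE sum_ord2 !summxE !sum_ord2 !mxE !mxtens_indexK.
rewrite /Ep /mxtrace !sum_ord2 !mxE.
case: (ord2P a) => ->; case: (ord2P b) => ->; case: (ord2P i) => ->; case: (ord2P j) => ->;
  rewrite /= ?mulr1n ?mulr0n !rCE !rmorphE; ring.
Qed.

Lemma xi_tens_scalar p : xi p *t (rC (1 / 2) *: 1%:M) = diag_mx (choi_Ep_diag p).
Proof.
apply/matrixP => r s; case: (mxtens_indexP r) => a i; case: (mxtens_indexP s) => b j.
rewrite diag_choi_Ep_index tensmxE ?mxE /xi ?mxE.
case: (ord2P a) => ->; case: (ord2P b) => ->; case: (ord2P i) => ->; case: (ord2P j) => ->;
  rewrite /= ?mulr1n ?mulr0n !rCE !rmorphE; ring.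
Qed.

Lemma choi_Ep_diag_ge p j : p <= 1 / 2 -> rC (p / 2) <= choi_Ep_diag p 0 j.
Proof.
move=> hp; rewrite mxE; case: ifP => // _.
by rewrite !rCE lecR ler_pM2r ?invr_gt0 ?ltr0n //; lra.
Qed.

End ChoiOperator.

Theorem proposition5 (R : realType) (p : R) (hp0 : 0 < p) (hp1 : p < 1 / 2) :
  boundariness (@qubit_channel R) (Ep p) = p * (1 - p) /\
  choi (Ep p) = xi p *t (rC (1 / 2) *: (1%:M : 'M[R[i]]_2)) /\
  eigenvalue (choi (Ep p)) (rC (p / 2)) /\
  (forall l : R[i], eigenvalue (choi (Ep p)) l -> rC (p / 2) <= l) /\
  p / 2 < p * (1 - p).
Proof.
have p01 : 0 <= p <= 1 by apply/andP; split; lra.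
split; first exact: boundariness_Ep.
split; first by rewrite choi_Ep xi_tens_scalar.
rewrite choi_Ep; split.
  have -> : rC (p / 2) = choi_Ep_diag p 0 (mxtens_index (0, 0)).
    by rewrite mxE mxtens_indexK.
  exact: eigenvalue_diag_mx.
split; first by move=> l /eigenvalue_diag_mxP [j ->]; apply: choi_Ep_diag_ge; lra.
by rewrite -[X in X < _]mulr1 -mulrA ltr_pM2l //; lra.
Qed.
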